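(* Let $(a_k)_{k\ge1}$ be positive integers, $M_0=0$, $M_1=0^{a_1-1}1$, $M_{k+1}=M_k^{a_{k+1}}M_{k-1}$ ($k\ge1$), $q_k=|M_k|$, and $\tilde M_k=(M_kM_{k-1})^{--}$ for $k\ge1$. Let $k\ge1$ and let $\mathbf{x}$ be an infinite word of the form $\mathbf{x}=UV\cdots$ (i.e. $UV$ is a prefix of $\mathbf{x}$), where $U$ is a finite word and $V$ is a factor of $M_k\tilde M_{k+1}$ with $|V|>q_k$. Then $r(|V|-q_k,\mathbf{x})\le|UV|$.
   Context: $|W|$ denotes the length of a word $W$; $W^{--}$ denotes $W$ deprived of its last two letters. For $\mathbf{x}=x_1x_2\ldots$, $x_i^j=x_i\cdots x_j$ and $r(n,\mathbf{x})=\min\{m\ge1:\ x_i^{i+n-1}=x_{m-n+1}^{m}\text{ for some } 1\le i\le m-n\}$. *)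

From mathcomp Require Import all_boot.
Set Implicit Arguments. Unset Strict Implicit. Unset Printing Implicit Defensive.

(* Words over the alphabet {0,1}, letters encoded as nat. Finite words are seq nat,
   an infinite word x = x_1 x_2 ... is a function nat -> nat with x_i = x (i-1). *)

(* Pairs (M_k, M_{k-1}); for k = 0 the second component is a dummy. *)
Fixpoint Mpair (a : nat -> nat) (k : nat) : seq nat * seq nat :=
  match k with
  | 0 => ([:: 0], [::])
  | k'.+1 =>
      match k' with
      | 0 => (nseq (a 1).-1 0 ++ [:: 1], [:: 0])
      | _ => let p := Mpair a k' in (flatten (nseq (a k) p.1) ++ p.2, p.1)
      end
  end.

Definition M (a : nat -> nat) (k : nat) : seq nat := (Mpair a k).1.

Definition q (a : nat -> nat) (k : nat) : nat := size (M a k).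

Definition dropLast2 (W : seq nat) : seq nat := take (size W - 2) W.

Definition Mtilde (a : nat -> nat) (k : nat) : seq nat := dropLast2 (M a k ++ M a k.-1).

(* x_i^j = x_i ... x_j  (1-based indices) *)
Definition factor (x : nat -> nat) (i j : nat) : seq nat :=
  mkseq (fun t => x (i - 1 + t)) (j.+1 - i).

(* m belongs to the set whose minimum is r(n,x):
   m >= 1 and x_i^{i+n-1} = x_{m-n+1}^m for some 1 <= i <= m-n. *)
Definition r_set (n : nat) (x : nat -> nat) (m : nat) : Prop :=
  1 <= m /\ exists i, 1 <= i /\ i <= m - n /\ factor x i (i + n - 1) = factor x (m - n + 1) m.

(* r(n,x) <= L, i.e. the set {m >= 1 : ...} has an element <= L
   (equivalently its minimum exists and is <= L). *)
Definition r_le (n : nat) (x : nat -> nat) (L : nat) : Prop :=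
  exists m, m <= L /\ r_set n x m.

From mathcomp Require Import all_boot.
From mathcomp Require Import zify.

(* The word M_k Mtilde_{k+1} has period q_k: it is a prefix of M_k^{a_{k+1}+1} M_k,
   because M_{k-1} M_k and M_k M_{k-1} agree except in their last two letters
   (the classical near-commutation of standard words, proved by induction on k).
   Every factor V of it inherits the period q_k, so the prefix of V of length
   |V| - q_k reappears as the suffix of V, i.e. as a suffix of the prefix UV of x. *)

Section Periods.

Context {T : eqType} (x0 : T).

Definition has_period (p : nat) (w : seq T) : Prop :=
  forall i, i + p < size w -> nth x0 w i = nth x0 w (i + p).

Lemma flatten_nseqSr n (s : seq T) : flatten (nseq n.+1 s) = flatten (nseq n s) ++ s.
Proof.
elim: n => [|n IH]; first by rewrite /= cats0.
by rewrite -[LHS]/(s ++ flatten (nseq n.+1 s)) {1}IH catA.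
Qed.

Lemma cat_flatten_nseq n (s : seq T) : s ++ flatten (nseq n s) = flatten (nseq n s) ++ s.
Proof. exact: flatten_nseqSr. Qed.

Lemma size_flatten_nseq n (s : seq T) : size (flatten (nseq n s)) = n * size s.
Proof. by rewrite size_flatten /shape map_nseq sumn_nseq mulnC. Qed.

Lemma has_period_flatten_nseq n s : has_period (size s) (flatten (nseq n s)).
Proof.
case: n => [//|n] i; rewrite size_flatten_nseq mulSn => hi.
have -> : nth x0 (flatten (nseq n.+1 s)) i = nth x0 (flatten (nseq n s)) i.
  by rewrite flatten_nseqSr nth_cat ifT // size_flatten_nseq; lia.
by rewrite /= nth_cat ifN ?addnK //; lia.
Qed.

Lemma has_period_take p n w : has_period p w -> has_period p (take n w).
Proof.
move=> Pw i; rewrite size_take => hi.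
have hn : i + p < n by move: hi; case: ifP; lia.
rewrite !nth_take //; last exact: leq_ltn_trans (leq_addr p i) hn.
by apply: Pw; move: hi; case: ifP; lia.
Qed.

Lemma has_period_infix p v w : infix v w -> has_period p w -> has_period p v.
Proof.
move=> /infixP [s1 [s2 ->]] Pw i hi.
have hi' : i < size v by lia.
have := Pw (size s1 + i); rewrite -addnA !size_cat !nth_cat !(ltnNge _ (size s1)) !leq_addr /=.
by rewrite !addKn hi hi'; apply; lia.
Qed.

End Periods.

Arguments has_period_take {T x0 p} n {w}.
Arguments has_period_infix {T x0 p v w}.

Lemma dropLast2_catl s w : 2 <= size w -> dropLast2 (s ++ w) = s ++ dropLast2 w.
Proof.
move=> hw; rewrite /dropLast2 size_cat take_cat ifN; last by lia.
by congr (_ ++ take _ _); lia.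
Qed.

Section StandardWords.

Context {a : nat -> nat}.
Hypothesis a_gt0 : forall k, 1 <= k -> 0 < a k.

Lemma MS k : 1 <= k -> M a k.+1 = flatten (nseq (a k.+1) (M a k)) ++ M a k.-1.
Proof. by case: k => [//|[|k]]. Qed.

Lemma q_gt0 k : 0 < q a k.
Proof.
elim: k => [//|[|k] IH]; first by rewrite /q /M /= size_cat addn1.
rewrite /q MS // size_cat size_flatten_nseq.
by rewrite addn_gt0 muln_gt0 a_gt0 // -/(q a k.+1) IH.
Qed.

Lemma size_M_cat_ge2 j l : 2 <= size (M a j ++ M a l).
Proof. by rewrite size_cat; have := q_gt0 j; have := q_gt0 l; rewrite /q; lia. Qed.

Lemma dropLast2_M_swap k : 1 <= k ->
  dropLast2 (M a k ++ M a k.-1) = dropLast2 (M a k.-1 ++ M a k).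
Proof.
elim: k => [//|[|k] IH] _.
  rewrite /M /=; have := a_gt0 1 isT; case: (a 1) => [//|b] _ /=.
  rewrite -cat_cons.
  have -> : 0 :: nseq b 0 = nseq b 0 ++ [:: 0] by elim: b => //= b ->.
  by rewrite -!catA (dropLast2_catl _ [:: 1; 0]) // (dropLast2_catl _ [:: 0; 1]).
rewrite MS //= -!catA [in RHS]catA cat_flatten_nseq -catA.
rewrite !(dropLast2_catl (flatten _)) ?size_M_cat_ge2 //.
by congr (_ ++ _); apply/esym/IH.
Qed.

Lemma take_M_pred k : 1 <= k ->
  take (q a k.-1 - 2) (M a k.-1) = take (q a k.-1 - 2) (M a k).
Proof.
case: k => [//|[|k]] _; first by rewrite /= !take0.
rewrite MS //=; have := a_gt0 k.+2 isT; case: (a k.+2) => [//|c] _ /=.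
rewrite -catA take_cat ifT //; have := q_gt0 k.+1; rewrite /q; lia.
Qed.

(* M_k Mtilde_{k+1} = M_k^{a_{k+1}} (M_k M_{k-1})^{--} = M_k^{a_{k+1}} (M_{k-1} M_k)^{--},
   and (M_{k-1} M_k)^{--} is a prefix of M_k M_k since M_{k-1}^{--} is a prefix of M_k. *)
Lemma M_Mtilde_period k : 1 <= k -> has_period 0 (q a k) (M a k ++ Mtilde a k.+1).
Proof.
move=> hk; set N := q a k + q a k.-1 - 2.
have prefix_MM : dropLast2 (M a k ++ M a k.-1) = take N (M a k ++ M a k).
  rewrite /dropLast2 size_cat !take_cat; case: ifP => // _.
  have -> : N - size (M a k) = q a k.-1 - 2 by rewrite /N /q; lia.
  by rewrite -take_M_pred //; congr (_ ++ take _ _); rewrite /q; lia.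
rewrite /Mtilde /= MS // -catA dropLast2_catl ?size_M_cat_ge2 // -dropLast2_M_swap //.
rewrite prefix_MM catA cat_flatten_nseq -flatten_nseqSr.
set G := flatten _.
have -> : G ++ take N (M a k ++ M a k) = take (size G + N) (G ++ M a k ++ M a k).
  by rewrite [in RHS]takeD (take_size_cat _ (erefl (size G))) (drop_size_cat _ (erefl (size G))).
rewrite catA -!flatten_nseqSr.
exact: has_period_take (has_period_flatten_nseq _ _ _).
Qed.

End StandardWords.

Section FactorsOfPrefix.

Variables (x : nat -> nat) (U V : seq nat).
Hypothesis x_prefix : forall t, t < size (U ++ V) -> x t = nth 0 (U ++ V) t.

Lemma factor_catr i n : i + n <= size V ->
  factor x (size U + i).+1 (size U + i + n) = mkseq (fun t => nth 0 V (i + t)) n.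
Proof.
move=> hn; rewrite /factor.
have -> : (size U + i + n).+1 - (size U + i).+1 = n by lia.
apply/eq_in_map => t; rewrite mem_iota add0n => ht.
rewrite subn1 /= -addnA x_prefix ?size_cat; last by lia.
by rewrite nth_cat ifN ?addKn //; lia.
Qed.

(* The occurrence of the prefix of length |V| - p of V starting at position |U| + 1
   and the one ending at position |UV| witness r(|V| - p, x) <= |UV|. *)
Lemma r_le_period p : 0 < p < size V -> has_period 0 p V ->
  r_le (size V - p) x (size (U ++ V)).
Proof.
move=> /andP [p_gt0 p_lt] Pv; set n := size V - p.
exists (size (U ++ V)); split => //; rewrite size_cat; split; first lia.
exists (size U + 0).+1; split => //; split; first lia.
have -> : (size U + 0).+1 + n - 1 = size U + 0 + n by lia.
have -> : size U + size V - n + 1 = (size U + p).+1 by lia.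
have -> : size U + size V = size U + p + n by lia.
rewrite !factor_catr; try lia.
apply/eq_in_map => t; rewrite mem_iota add0n => ht.
have htp : t + p < size V by rewrite addnC -ltn_subRL; case/andP: ht.
by rewrite add0n addnC -Pv.
Qed.

End FactorsOfPrefix.

Theorem lemma7p4 (a : nat -> nat) (ha : forall k, 1 <= k -> 0 < a k)
  (k : nat) (hk : 1 <= k) (x : nat -> nat) (U V : seq nat)
  (hpref : forall t, t < size (U ++ V) -> x t = nth 0 (U ++ V) t)
  (hV : infix V (M a k ++ Mtilde a k.+1))
  (hlen : q a k < size V) :
  r_le (size V - q a k) x (size (U ++ V)).
Proof.
apply: r_le_period => //; first by rewrite (q_gt0 ha).
exact: has_period_infix hV (M_Mtilde_period ha k hk).
Qed.
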